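(* For any pair of simplices $\sigma,\tau$ on $\gamma_d$, exactly one of the following four cases occurs: (A) $\sigma$ and $\tau$ do not overlap in $\mathbb{R}^d$; equivalently, they are not $(d+2)$-interlacing. (B) $\sigma<_{d+1}\tau$; equivalently, $\sigma,\tau$ are $(d+2)$-interlacing with a sequence beginning with an element of $\sigma$ but not with one beginning with an element of $\tau$ when $d$ is even, and with a sequence beginning with an element of $\tau$ but not with one beginning with an element of $\sigma$ when $d$ is odd. (C) $\tau<_{d+1}\sigma$; equivalently, the condition of (B) holds with the roles of $\sigma$ and $\tau$ interchanged. (D) the liftings $\hat\sigma$ and $\hat\tau$ overlap in $\mathbb{R}^{d+1}$; equivalently, $\sigma$ and $\tau$ are $(d+3)$-interlacing.
   Context: $\gamma_d=\{(t,t^2,\dots,t^d):t\in\mathbb{R}\}$; points on it are ordered by parameter. A simplex on $\gamma_d$ is a subset $\sigma\subseteq\gamma_d$ with $|\sigma|\le d+1$ (sizes of $\sigma,\tau$ may differ), identified with $\mathrm{conv}(\sigma)$. Simplices overlap in $\mathbb{R}^d$ if $\mathrm{conv}(\sigma)\cap\mathrm{conv}(\tau)\supsetneq\mathrm{conv}(\sigma\cap\tau)$. Subsets $\sigma,\tau$ are $k$-interlacing if there are $v_1<\dots<v_k$ in $\sigma\cup\tau$ with alternating membership, beginning either with $v_1\in\sigma$ ($v_1\in\sigma,v_2\in\tau,\dots$) or with $v_1\in\tau$ ($v_1\in\tau,v_2\in\sigma,\dots$). The lifting of $\sigma=\{\gamma_d(t_i)\}$ is $\hat\sigma=\{\gamma_{d+1}(t_i)\}\subseteq\mathbb{R}^{d+1}$;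 the height function $h_\sigma:\mathrm{conv}(\sigma)\to\mathbb{R}$ gives the last coordinate of the point of $\mathrm{conv}(\hat\sigma)$ projecting to $p$. $\sigma<_{d+1}\tau$ means $\sigma,\tau$ overlap in $\mathbb{R}^d$ and $h_\sigma\le h_\tau$ on $\mathrm{conv}(\sigma)\cap\mathrm{conv}(\tau)$. *)

From HB Require Import structures.
From mathcomp Require Import all_boot all_order all_algebra.
From mathcomp Require Import reals.
Unset Printing Implicit Defensive.
Import Order.TTheory GRing.Theory Num.Theory.
Local Open Scope ring_scope.

(* A simplex on the moment curve gamma_d is represented by the (duplicate-free)
   list of parameters t of its vertices gamma_d(t). *)

Section Defs.
Variable R : realType.

Definition moment (d : nat) (t : R) : 'rV[R]_d := \row_(i < d) t ^+ i.+1.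

Definition simplex_on (d : nat) (s : seq R) : Prop :=
  uniq s /\ (size s <= d.+1)%N.

Definition conv (d : nat) (s : seq R) (p : 'rV[R]_d) : Prop :=
  exists w : R -> R,
    (forall t, t \in s -> 0 <= w t) /\
    \sum_(t <- s) w t = 1 /\
    p = \sum_(t <- s) w t *: moment d t.

Definition seqI (s u : seq R) : seq R := [seq x <- s | x \in u].

Definition overlap (d : nat) (s u : seq R) : Prop :=
  (forall p, conv d (seqI s u) p -> conv d s p /\ conv d u p) /\
  (exists p, conv d s p /\ conv d u p /\ ~ conv d (seqI s u) p).

Definition interlacing_from (k : nat) (s u : seq R) : Prop :=
  exists v : nat -> R,
    (forall i, (i.+1 < k)%N -> v i < v i.+1) /\
    (forall i, (i < k)%N -> if odd i then v i \in u else v i \in s).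

Definition interlacing (k : nat) (s u : seq R) : Prop :=
  interlacing_from k s u \/ interlacing_from k u s.

Definition proj (d : nat) (q : 'rV[R]_d.+1) : 'rV[R]_d :=
  \row_(i < d) q 0 (widen_ord (leqnSn d) i).
Definition lastc (d : nat) (q : 'rV[R]_d.+1) : R := q 0 ord_max.

(* sigma <_{d+1} tau : they overlap in R^d and h_sigma <= h_tau on
   conv(sigma) ∩ conv(tau); here h_sigma(p) is the last coordinate of the
   point q of conv(hat sigma) (the convex hull of the lifted vertices
   gamma_{d+1}(t_i)) with proj q = p. *)
Definition below (d : nat) (s u : seq R) : Prop :=
  overlap d s u /\
  (forall (p : 'rV[R]_d) (q q' : 'rV[R]_d.+1),
      conv d s p -> conv d u p ->
      conv d.+1 s q -> proj d q = p ->
      conv d.+1 u q' -> proj d q' = p ->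
      lastc d q <= lastc d q').

End Defs.

Arguments moment {R} d t.
Arguments simplex_on {R} d s.
Arguments conv {R} d s p.
Arguments seqI {R} s u.
Arguments overlap {R} d s u.
Arguments interlacing_from {R} k s u.
Arguments interlacing {R} k s u.
Arguments proj {R} d q.
Arguments lastc {R} d q.
Arguments below {R} d s u.

Definition exactly_one4 (A B C D : Prop) : Prop :=
  (A \/ B \/ C \/ D) /\
  ~ (A /\ B) /\ ~ (A /\ C) /\ ~ (A /\ D) /\
  ~ (B /\ C) /\ ~ (B /\ D) /\ ~ (C /\ D).

From HB Require Import structures.
From mathcomp Require Import all_boot all_order all_algebra.
From mathcomp Require Import reals ring lra zify.
From Stdlib Require Import Classical.
Import Order.TTheory GRing.Theory Num.Theory.
Local Open Scope ring_scope.

(* Two convex combinations of points of the moment curve representing the same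
   point of R^d differ by a signed measure whose moments of order <= d vanish.
   Such a measure changes sign at least d + 1 times along the curve (Descartes'
   rule of signs), which yields a (d + 2)-interlacing sequence. Conversely, on
   d + 2 interlacing parameters the kernel of the Vandermonde system is an
   alternating measure whose positive and negative parts give a common point of
   the two simplices outside the hull of their common face. The moment of order
   d + 1 of the measure is the height difference of the two lifts over that
   point; when there are exactly d + 1 sign changes its sign is determined by
   the parity of d and the end of the sign pattern, while d + 2 sign changes
   (a (d + 3)-interlacing) make the lifts cross. *)

Section MomentCurve.
Context {R : realType}.
Implicit Types (l w : R -> R) (a b U : seq R) (v : nat -> R).

Definition power_sum U l k := \sum_(t <- U) l t * t ^+ k.

Lemma power_sum0 U l : power_sum U l 0%N = \sum_(t <- U) l t.
Proof. by rewrite /power_sum; apply: eq_bigr => t _; rewrite expr0 mulr1. Qed.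

Lemma power_sumB U l l' k :
  power_sum U (fun t => l t - l' t) k = power_sum U l k - power_sum U l' k.
Proof. by rewrite /power_sum -sumrB; apply: eq_bigr => t _; rewrite mulrBl. Qed.

Lemma sqr_gt0 (x : R) : x != 0 -> 0 < x * x.
Proof. by move=> x0; rewrite -expr2 lt0r sqrf_eq0 x0 sqr_ge0. Qed.

Lemma same_sign_trans (x y z : R) : 0 < x * y -> 0 < y * z -> 0 < x * z.
Proof. by move=> xy yz; nra. Qed.

Lemma eq_big_support (V : zmodType) a b (f : R -> V) :
  uniq a -> uniq b -> (forall t, f t != 0 -> (t \in a) = (t \in b)) ->
  \sum_(t <- a) f t = \sum_(t <- b) f t.
Proof.
move=> ua ub supp.
have drop0 c : \sum_(t <- c) f t = \sum_(t <- [seq t <- c | f t != 0]) f t.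
  by rewrite big_filter; symmetry; apply: big_rmcond => t /negPn /eqP.
rewrite drop0 [RHS]drop0; apply/perm_big/uniq_perm; rewrite ?filter_uniq //.
by move=> t; rewrite !mem_filter; case: (boolP (f t != 0)) => //= /supp.
Qed.

Definition restrict a w t := if t \in a then w t else 0.

Lemma big_restrict [V : zmodType] [a U w] (F : R -> R -> V) :
  uniq a -> uniq U -> {subset a <= U} -> (forall t, F 0 t = 0) ->
  \sum_(t <- a) F (w t) t = \sum_(t <- U) F (restrict a w t) t.
Proof.
move=> ua uU aU F0.
rewrite -(@eq_big_support _ a U) //; last first.
  by move=> t; rewrite /restrict; case: ifP => [/aU -> //|_]; rewrite F0 eqxx.
by apply: eq_big_seq => t ta; rewrite /restrict ta.
Qed.

Lemma restrict_sub a U w c :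
  {subset a <= U} -> {in U, w =1 restrict a c} -> restrict U w =1 restrict a c.
Proof.
move=> aU eqU t; rewrite {1}/restrict; case: ifP => [/eqU -> //|tU].
by rewrite /restrict; case: ifP => // /aU; rewrite tU.
Qed.

Definition increasing v m := forall i, (i.+1 < m)%N -> v i < v i.+1.

Lemma sorted_mkseq [v m] : increasing v m -> sorted <%R (mkseq v m).
Proof.
move=> vinc; apply/(sortedP 0) => i; rewrite size_mkseq => im.
by rewrite nth_mkseq ?(ltnW im) // nth_mkseq //; apply: vinc.
Qed.

Lemma uniq_mkseq [v m] : increasing v m -> uniq (mkseq v m).
Proof. by move/sorted_mkseq; rewrite lt_sorted_uniq_le => /andP []. Qed.

Lemma mem_mkseqP v m t : reflect (exists2 i, (i < m)%N & t = v i) (t \in mkseq v m).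
Proof.
apply: (iffP mapP) => [[i]|[i im ->]]; last by exists i; rewrite // mem_iota.
by rewrite mem_iota => /andP [_ im] ->; exists i.
Qed.

Lemma mkseq_mem v m i : (i < m)%N -> v i \in mkseq v m.
Proof. by move=> im; apply/mem_mkseqP; exists i. Qed.

Lemma increasing_mkseq_eq [v v' m] :
  increasing v m -> increasing v' m -> (forall i, (i < m)%N -> v' i \in mkseq v m) ->
  forall i, (i < m)%N -> v' i = v i.
Proof.
move=> vinc v'inc v'v i im.
have sub : {subset mkseq v' m <= mkseq v m}.
  by move=> x /mem_mkseqP [j /v'v jv ->].
have size_le : (size (mkseq v m) <= size (mkseq v' m))%N by rewrite !size_mkseq.
have [_ eqm] := uniq_min_size (uniq_mkseq v'inc) sub size_le.
have := lt_sorted_eq (sorted_mkseq v'inc) (sorted_mkseq vinc) eqm.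
by move/(congr1 (nth 0 ^~ i)); rewrite !nth_mkseq.
Qed.

Definition alternating l v n :=
  forall i, (i < n)%N -> v i < v i.+1 /\ l (v i) * l (v i.+1) < 0.

Lemma alternating_increasing [l v n] : alternating l v n -> increasing v n.+1.
Proof. by move=> alt i; move/alt => []. Qed.

Lemma alternating_size [l v n U] :
  alternating l v n -> (forall i, (i <= n)%N -> v i \in U) -> (n < size U)%N.
Proof.
move=> /alternating_increasing vinc vU; rewrite -(size_mkseq v n.+1).
by apply: uniq_leq_size (uniq_mkseq vinc) _ => x /mem_mkseqP [i /vU iU ->].
Qed.

Lemma alternating_neq0 [l v n i] :
  (0 < n)%N -> alternating l v n -> (i <= n)%N -> l (v i) != 0.
Proof.
move=> n0 alt; rewrite leq_eqVlt => /orP [/eqP ->|/alt [_]]; last first.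
  by apply: contraTneq => ->; rewrite mul0r ltxx.
have lt_pred : (n.-1 < n)%N by rewrite prednK.
have [_] := alt n.-1 lt_pred.
by rewrite prednK //; apply: contraTneq => ->; rewrite mulr0 ltxx.
Qed.

Lemma alternating_sign [l v n] j i :
  (0 < n)%N -> alternating l v n -> (j + i <= n)%N ->
  0 < (-1) ^+ i * (l (v j) * l (v (j + i)%N)).
Proof.
move=> n0 alt; elim: i => [|i IH] jin.
  rewrite addn0 mul1r sqr_gt0 //.
  by apply: alternating_neq0 n0 alt _; rewrite addn0 in jin.
have jin' : (j + i < n)%N by rewrite -addnS.
have [_ alt_i] := alt (j + i)%N jin'.
have := IH (ltnW jin'); rewrite exprS addnS; nra.
Qed.

Lemma alternating_opp l v n : alternating l v n -> alternating (fun t => - l t) v n.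
Proof. by move=> alt i /alt [vi li]; rewrite mulrNN. Qed.

Lemma alternating_interlacing [l v n a b j k] :
  (0 < n)%N -> alternating l v n ->
  (forall t, 0 < l t -> t \in a) -> (forall t, l t < 0 -> t \in b) ->
  (j + k <= n.+1)%N -> 0 < l (v j) -> interlacing_from k a b.
Proof.
move=> n0 alt pos_a neg_b jk lvj; exists (fun i => v (j + i)%N); split=> i ik.
  by rewrite addnS; apply: (alt _ _).1; lia.
have ji : (j + i <= n)%N by lia.
have := alternating_sign j i n0 alt ji; rewrite -signr_odd.
by case: (odd i); rewrite /= ?expr0 ?expr1 ?mul1r ?mulN1r => sgn;
  [apply: neg_b | apply: pos_a]; nra.
Qed.

Lemma alternating_interlacingN [l v n a b j k] :
  (0 < n)%N -> alternating l v n ->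
  (forall t, 0 < l t -> t \in a) -> (forall t, l t < 0 -> t \in b) ->
  (j + k <= n.+1)%N -> l (v j) < 0 -> interlacing_from k b a.
Proof.
move=> n0 /alternating_opp alt pos_a neg_b jk lvj.
apply: (alternating_interlacing n0 alt) jk _; last by rewrite oppr_gt0.
  by move=> t; rewrite oppr_gt0; apply: neg_b.
by move=> t; rewrite oppr_lt0; apply: pos_a.
Qed.

Lemma alternating_interlacing_any [l v n a b k] :
  (0 < n)%N -> alternating l v n ->
  (forall t, 0 < l t -> t \in a) -> (forall t, l t < 0 -> t \in b) ->
  (k <= n.+1)%N -> interlacing k a b.
Proof.
move=> n0 alt pos_a neg_b kn; have := alternating_neq0 n0 alt (leq0n n).
case: ltrgtP => // [neg|pos] _; [right | left].
  exact: (alternating_interlacingN (j := 0%N) n0 alt).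
exact: (alternating_interlacing (j := 0%N) n0 alt).
Qed.

(** * Sign changes of measures with vanishing moments *)

Fixpoint sign_changes l (s : seq R) : nat :=
  if s is x :: s' then
    if s' is y :: _ then ((l x * l y < 0)%R + sign_changes l s')%N else 0%N
  else 0%N.

Lemma sorted_head_lt [h : R] [s] : sorted <%R (h :: s) -> {in s, forall t, h < t}.
Proof. by move=> /(order_path_min (@lt_trans _ R)) /allP. Qed.

Lemma alternating_chain [l h tl] :
  sorted <%R (h :: tl) -> {in h :: tl, forall t, l t != 0} ->
  exists2 v, alternating l v (sign_changes l (h :: tl)) &
    [/\ v 0%N = h, forall i, (i <= sign_changes l (h :: tl))%N -> v i \in h :: tl
      & 0 < l (v (sign_changes l (h :: tl))) * l (last h tl)].
Proof.
elim: tl h => [|t' tl IH] h hsort nz.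
  exists (fun _ => h) => //; split=> // [i _|]; first by rewrite mem_head.
  by rewrite sqr_gt0 ?nz ?mem_head.
have ht' : h < t' by move: hsort => /= /andP [].
have nz' : {in t' :: tl, forall t, l t != 0}.
  by move=> t tin; apply: nz; rewrite inE tin orbT.
have [v' alt' [v'0 v'mem v'last]] := IH t' (path_sorted hsort) nz'.
have mem' i : (i <= sign_changes l (t' :: tl))%N -> v' i \in h :: t' :: tl.
  by move=> /v'mem vi; rewrite inE vi orbT.
have -> : sign_changes l [:: h, t' & tl] =
  ((l h * l t' < 0)%R + sign_changes l (t' :: tl))%N by [].
move: (sign_changes _ _) alt' v'mem v'last mem' => n alt' v'mem v'last mem'.
case: (ltrP (l h * l t') 0) => [opp | same].
  rewrite add1n; exists (fun i => if i is k.+1 then v' k else h).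
    by case=> [_|i /alt' //]; rewrite v'0.
  by split=> // -[|i /mem'] //; rewrite mem_head.
rewrite add0n.
have {}same : 0 < l h * l t'.
  rewrite lt0r same andbT mulf_neq0 //; [apply: nz | apply: nz']; exact: mem_head.
exists (fun i => if i is 0%N then h else v' i).
  case=> [n0|i /alt' //]; have [v'01 lv'01] := alt' 0%N n0.
  by rewrite -v'0 in ht' same; split; [apply: lt_trans v'01 | nra].
split=> // [[|i /mem'] //|]; first by rewrite mem_head.
by case: n v'last {alt' v'mem mem'} => [|n]; rewrite // v'0 => v'last; nra.
Qed.

Lemma sign_poly [l h tl] :
  sorted <%R (h :: tl) -> {in h :: tl, forall t, l t != 0} ->
  exists P : {poly R},
    [/\ size P = (sign_changes l (h :: tl)).+1, lead_coef P = l (last h tl),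
        {in h :: tl, forall t, 0 < l t * P.[t]}
      & forall x, x <= h -> 0 < P.[x] * P.[h]].
Proof.
elim: tl h => [|t' tl IH] h hsort nz.
  have lh0 := nz h (mem_head _ _).
  exists (l h)%:P; rewrite size_polyC lead_coefC lh0; split=> // [t|x _].
    by rewrite inE => /eqP ->; rewrite hornerC sqr_gt0.
  by rewrite !hornerC sqr_gt0.
have ht' : h < t' by move: hsort => /= /andP [].
have nz' : {in t' :: tl, forall t, l t != 0}.
  by move=> t tin; apply: nz; rewrite inE tin orbT.
have [P [sizeP leadP signP rootsP]] := IH t' (path_sorted hsort) nz'.
have t'_le t : t \in t' :: tl -> t' <= t.
  by rewrite inE => /orP [/eqP -> //|/(sorted_head_lt (path_sorted hsort))/ltW].
have Pt' := signP t' (mem_head _ _).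
have Pht' : 0 < P.[h] * P.[t'] by apply: rootsP; apply: ltW.
have -> : sign_changes l [:: h, t' & tl] =
  ((l h * l t' < 0)%R + sign_changes l (t' :: tl))%N by [].
case: (ltrP (l h * l t') 0) => [opp | same].
  pose c := (h + t') / 2.
  have hc : h < c by rewrite /c; lra.
  have ct' : c < t' by rewrite /c; lra.
  exists (P * ('X - c%:P)); split.
  - have P0 : P != 0 by rewrite -size_poly_eq0 sizeP.
    by rewrite size_mul ?polyXsubC_eq0 // size_XsubC sizeP addn2 add1n.
  - by rewrite lead_coefM lead_coefXsubC mulr1.
  - move=> t; rewrite inE hornerM hornerXsubC => /orP [/eqP ->|t_tl].
      have : (l h * l t') * (P.[h] * P.[t']) < 0 by rewrite pmulr_llt0.
      rewrite mulrA; have : h - c < 0 by lra.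
      nra.
    by rewrite mulrA mulr_gt0 ?signP //; have := t'_le t t_tl; lra.
  - move=> x xh; rewrite !hornerM !hornerXsubC.
    have Pxt' : 0 < P.[x] * P.[t'] by apply: rootsP; rewrite (le_trans xh) ?ltW.
    have Pxh : 0 < P.[x] * P.[h] by apply: same_sign_trans Pxt' _; rewrite mulrC.
    by rewrite mulrACA mulr_gt0 //; nra.
have {}same : 0 < l h * l t'.
  rewrite lt0r same andbT mulf_neq0 //; [apply: nz | apply: nz']; exact: mem_head.
exists P; split=> // [t|x xh].
  by rewrite inE => /orP [/eqP ->|/signP //]; nra.
have Pxt' : 0 < P.[x] * P.[t'] by apply: rootsP; rewrite (le_trans xh) ?ltW.
by apply: same_sign_trans Pxt' _; rewrite mulrC.
Qed.

Lemma horner_power_sum U l (P : {poly R}) :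
  \sum_(t <- U) l t * P.[t] = \sum_(i < size P) P`_i * power_sum U l i.
Proof.
under eq_bigr do rewrite horner_coef mulr_sumr.
rewrite exchange_big /=; apply: eq_bigr => i _.
by rewrite /power_sum mulr_sumr; apply: eq_bigr => t _; rewrite mulrCA.
Qed.

(* Descartes' rule: pairing [l] with a polynomial of the same sign pattern gives
   a positive number, which the vanishing moments force to be 0 unless the
   degree, i.e. the number of sign changes, exceeds [D]. *)
Lemma sorted_vanishing_moments [l h tl D] :
  sorted <%R (h :: tl) -> {in h :: tl, forall t, l t != 0} ->
  (forall k, (k <= D)%N -> power_sum (h :: tl) l k = 0) ->
  (D < sign_changes l (h :: tl))%N /\
  (sign_changes l (h :: tl) = D.+1 -> 0 < l (last h tl) * power_sum (h :: tl) l D.+1).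
Proof.
move=> hsort nz mom; have [P [sizeP leadP signP _]] := sign_poly hsort nz.
set n := sign_changes l (h :: tl) in sizeP *.
have : 0 < \sum_(t <- h :: tl) l t * P.[t].
  rewrite big_seq lt0r psumr_neq0 => [|t /signP/ltW //].
  rewrite sumr_ge0 ?andbT => [|t /signP/ltW //].
  by apply/hasP; exists h; rewrite ?mem_head //= signP ?mem_head.
rewrite horner_power_sum sizeP => pos; split=> [|nD].
  rewrite ltnNge; apply/negP => nD; move: pos; rewrite big1 ?ltxx // => i _.
  by rewrite mom ?mulr0 // -ltnS (leq_trans (ltn_ord i)).
move: pos; rewrite big_ord_recr /= big1 ?add0r => [|i _]; last first.
  by rewrite mom ?mulr0 // -ltnS -nD ltn_ord.
by rewrite -nD -leadP lead_coefE sizeP.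
Qed.

Lemma vanishing_moments_alternating [l U D] :
  uniq U -> has (fun t => l t != 0) U ->
  (forall k, (k <= D)%N -> power_sum U l k = 0) ->
  exists n v, [/\ (D < n)%N, alternating l v n, forall i, (i <= n)%N -> v i \in U
                & n = D.+1 -> 0 < l (v n) * power_sum U l D.+1].
Proof.
move=> uU nzU mom.
pose s := [seq t <- sort <=%R U | l t != 0].
have mem_s t : (t \in s) = (l t != 0) && (t \in U) by rewrite mem_filter mem_sort.
have ps_s k : power_sum s l k = power_sum U l k.
  apply: eq_big_support; rewrite ?filter_uniq ?sort_uniq // => t.
  by rewrite mem_s mulf_eq0 negb_or => /andP [->].
have : sorted <%R s by rewrite sorted_filter ?sort_lt_sorted //; apply: lt_trans.
case Es: s => [|h tl] hsort.
  by case/hasP: nzU => t tU tnz; have := mem_s t; rewrite Es tU tnz.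
have nz : {in h :: tl, forall t, l t != 0} by move=> t; rewrite -Es mem_s => /andP [].
have mom' k : (k <= D)%N -> power_sum (h :: tl) l k = 0 by rewrite -Es ps_s; apply: mom.
have [Dn top] := sorted_vanishing_moments hsort nz mom'.
have [v alt [_ vs vlast]] := alternating_chain hsort nz.
exists (sign_changes l (h :: tl)), v; split=> // [i /vs|nD].
  by rewrite -Es mem_s => /andP [].
by apply: same_sign_trans vlast _; rewrite -(ps_s D.+1) Es top.
Qed.

Lemma vanishing_moments_small [l U D] :
  uniq U -> (size U <= D.+1)%N -> (forall k, (k <= D)%N -> power_sum U l k = 0) ->
  {in U, forall t, l t = 0}.
Proof.
move=> uU sizeU mom t tU; apply/eqP/negPn/negP => lt0.
have nzU : has (fun t => l t != 0) U by apply/hasP; exists t.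
have [n [v [Dn alt vU _]]] := vanishing_moments_alternating uU nzU mom.
by have := alternating_size alt vU; lia.
Qed.

Lemma vandermonde_kernel [D v] : increasing v D.+2 ->
  exists2 l, has (fun t => l t != 0) (mkseq v D.+2) &
    forall k, (k <= D)%N -> power_sum (mkseq v D.+2) l k = 0.
Proof.
move=> vinc; set vs := mkseq v D.+2.
pose A := \matrix_(i < D.+2, k < D.+1) v i ^+ k.
pose x := nz_row (kermx A).
have x0 : x != 0.
  rewrite nz_row_eq0 kermx_eq0; apply/negP => /eqP rkA.
  by have := rank_leq_col A; rewrite rkA ltnn.
have xA : x *m A = 0 by apply/sub_kermxP/nz_row_sub.
pose l t := x 0 (inord (index t vs)).
have lv (i : 'I_D.+2) : l (v i) = x 0 i.
  by rewrite /l -(nth_mkseq 0 v (ltn_ord i)) index_uniq ?size_mkseq ?uniq_mkseq ?inord_val.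
exists l.
  have [j xj] : exists j, x 0 j != 0.
    apply/existsP; move: x0; apply: contraNT => /existsPn xz.
    by apply/eqP/rowP => j; rewrite mxE; apply/eqP/negPn/xz.
  by apply/hasP; exists (v j); rewrite ?lv ?mkseq_mem.
move=> k kD; have -> : power_sum vs l k = (x *m A) 0 (Ordinal (kD : (k < D.+1)%N)).
  rewrite mxE /power_sum /vs /mkseq big_map -[iota _ _]/(index_iota 0 D.+2) big_mkord.
  by apply: eq_bigr => i _; rewrite lv mxE.
by rewrite xA mxE.
Qed.

(* A nonzero kernel vector changes sign at least [D + 1] times along the
   [D + 2] points, hence at every step. *)
Lemma alternating_kernel [D v] : increasing v D.+2 ->
  exists mu, [/\ forall t, mu t != 0 -> t \in mkseq v D.+2,
      forall i, (i < D.+2)%N -> 0 < (-1) ^+ i * mu (v i),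
      forall k, (k <= D)%N -> power_sum (mkseq v D.+2) mu k = 0
    & 0 < (-1) ^+ D.+1 * power_sum (mkseq v D.+2) mu D.+1].
Proof.
move=> vinc; set vs := mkseq v D.+2.
have [l nz mom] := vandermonde_kernel vinc.
have [n [w [Dn alt wvs top]]] := vanishing_moments_alternating (uniq_mkseq vinc) nz mom.
have nD : n = D.+1 by have := alternating_size alt wvs; rewrite size_mkseq; lia.
subst n; have wv := increasing_mkseq_eq vinc (alternating_increasing alt) wvs.
have {}alt : alternating l v D.+1.
  by move=> i iD; have := alt i iD; rewrite !wv // ltnW.
have sign i : (i < D.+2)%N -> 0 < (-1) ^+ i * (l (v 0%N) * l (v i)).
  exact: alternating_sign 0%N i (ltn0Sn D) alt.
pose mu t := l (v 0%N) * restrict vs l t.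
have ps_mu k : power_sum vs mu k = l (v 0%N) * power_sum vs l k.
  rewrite /power_sum mulr_sumr; apply: eq_big_seq => t tin.
  by rewrite /mu /restrict tin mulrA.
exists mu; split.
- by move=> t; rewrite /mu /restrict; case: ifP => // _; rewrite mulr0 eqxx.
- by move=> i iD; rewrite /mu /restrict mkseq_mem //; apply: sign.
- by move=> k kD; rewrite ps_mu mom ?mulr0.
rewrite ps_mu mulrA; apply: (@same_sign_trans _ (l (v D.+1))).
  by rewrite -mulrA; apply: sign.
by rewrite -wv //; apply: top.
Qed.

Lemma interlacing_kernel D a b : interlacing_from D.+2 a b ->
  exists U mu, [/\ uniq U, forall t, mu t != 0 -> t \in U,
    forall t, (0 < mu t -> t \in a) /\ (mu t < 0 -> t \in b),
    forall k, (k <= D)%N -> power_sum U mu k = 0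
  & 0 < (-1) ^+ D.+1 * power_sum U mu D.+1].
Proof.
move=> [v [vinc vmem]]; have [mu [supp sgn mom top]] := alternating_kernel vinc.
exists (mkseq v D.+2), mu; split=> // [|t]; first exact: uniq_mkseq.
have [/eqP mu0|/supp/mem_mkseqP [i iD ->]] := boolP (mu t == 0).
  by rewrite mu0 ltxx.
move: (sgn i iD) (vmem i iD); rewrite -signr_odd.
by case: (odd i); rewrite /= ?expr0 ?expr1 ?mul1r ?mulN1r => sgn_i vi; split=> // ?; lra.
Qed.

Lemma jordan_weights [U mu] :
  \sum_(t <- U) mu t = 0 -> has (fun t => mu t != 0) U ->
  exists2 c, 0 < c & exists wa wb : R -> R,
    [/\ (forall t, 0 <= wa t) /\ (forall t, 0 <= wb t),
        \sum_(t <- U) wa t = 1 /\ \sum_(t <- U) wb t = 1,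
        (forall t, wa t != 0 -> 0 < mu t) /\ (forall t, wb t != 0 -> mu t < 0)
      & forall t, wa t - wb t = c * mu t].
Proof.
move=> mass0 /hasP [t0 t0U mu_t0]; pose S := \sum_(t <- U) `|mu t|.
have S0 : 0 < S.
  rewrite lt0r psumr_neq0 => [|t _]; last exact: normr_ge0.
  rewrite sumr_ge0 ?andbT => [|t _]; last exact: normr_ge0.
  by apply/hasP; exists t0; rewrite //= normr_gt0.
have S_neq0 : S != 0 by rewrite lt0r_neq0.
have norm_pm t : 0 <= `|mu t| + mu t /\ 0 <= `|mu t| - mu t.
  by have := ler_norm (mu t); have := ler_norm (- mu t); rewrite normrN; lra.
exists (2 / S); first by rewrite divr_gt0.
exists (fun t => (`|mu t| + mu t) / S), (fun t => (`|mu t| - mu t) / S); split.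
- by split=> t; rewrite divr_ge0 ?(ltW S0) ?(norm_pm t).1 ?(norm_pm t).2.
- by rewrite -!mulr_suml big_split sumrB /= mass0 addr0 subr0 divff.
- split=> t; rewrite mulf_eq0 negb_or => /andP [+ _]; case: (ltrgtP (mu t) 0) => //.
  + by move=> mu_neg; rewrite ltr0_norm // addNr eqxx.
  + by move=> ->; rewrite normr0 addr0 eqxx.
  + by move=> mu_pos; rewrite gtr0_norm // subrr eqxx.
  + by move=> ->; rewrite normr0 subr0 eqxx.
- by move=> t; field.
Qed.

(** * Convex combinations of points of the moment curve *)

Definition comb D a w : 'rV[R]_D := \sum_(t <- a) w t *: moment D t.

Definition weights a w := (forall t, t \in a -> 0 <= w t) /\ \sum_(t <- a) w t = 1.

Lemma conv_comb D a w : weights a w -> conv D a (comb D a w).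
Proof. by move=> [w0 w1]; exists w. Qed.

Lemma comb_coord D a w (j : 'I_D) : comb D a w 0 j = power_sum a w j.+1.
Proof. by rewrite summxE; apply: eq_bigr => t _; rewrite !mxE. Qed.

Lemma proj_comb D a w : proj D (comb D.+1 a w) = comb D a w.
Proof. by apply/rowP => j; rewrite mxE !comb_coord. Qed.

Lemma lastc_comb D a w : lastc D (comb D.+1 a w) = power_sum a w D.+1.
Proof. exact: comb_coord. Qed.

Lemma comb_eq_power_sums [D a b wa wb] :
  \sum_(t <- a) wa t = \sum_(t <- b) wb t ->
  comb D a wa = comb D b wb <->
  forall k, (k <= D)%N -> power_sum a wa k = power_sum b wb k.
Proof.
move=> sum_eq; split=> [eq_comb [|k] kD|eq_ps]; first by rewrite !power_sum0.
  by have := congr1 (fun p : 'rV[R]_D => p 0 (Ordinal kD)) eq_comb; rewrite !comb_coord.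
by apply/rowP => j; rewrite !comb_coord eq_ps.
Qed.

Lemma conv_subset [D a' a p] :
  uniq a' -> uniq a -> {subset a' <= a} -> conv D a' p -> conv D a p.
Proof.
move=> ua' ua sub [c [c0 [c1 ->]]]; exists (restrict a' c); split; [|split].
- by move=> t _; rewrite /restrict; case: ifP => [/c0 //|_]; rewrite lexx.
- by rewrite -c1 (big_restrict (fun x _ => x) ua' ua sub).
- rewrite (big_restrict (fun x t => x *: moment D t) ua' ua sub) // => t.
  by rewrite scale0r.
Qed.

Lemma conv_seqI D a b p :
  uniq a -> uniq b -> conv D (seqI a b) p -> conv D a p /\ conv D b p.
Proof.
move=> ua ub cp; have uI : uniq (seqI a b) by apply: filter_uniq.
by split; apply: (conv_subset uI) cp => // t; rewrite mem_filter => /andP [].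
Qed.

Lemma conv_seqIC [D a b p] :
  uniq a -> uniq b -> conv D (seqI a b) p -> conv D (seqI b a) p.
Proof.
move=> ua ub; apply: conv_subset; rewrite ?filter_uniq // => t.
by rewrite !mem_filter andbC.
Qed.

Lemma barycentric_unique D a w w' :
  uniq a -> (size a <= D.+1)%N -> \sum_(t <- a) w t = \sum_(t <- a) w' t ->
  comb D a w = comb D a w' -> {in a, w =1 w'}.
Proof.
move=> ua sa sum_eq /(comb_eq_power_sums sum_eq) eq_ps t ta; apply/eqP.
rewrite -subr_eq0; apply/eqP.
apply: (vanishing_moments_small (l := fun x => w x - w' x) ua sa _ t ta) => k kD.
by rewrite power_sumB eq_ps ?subrr.
Qed.

Lemma conv_seqI_restrict D [a b wa wb] : uniq a -> uniq b -> weights a wa ->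
  {in a ++ b, forall t, restrict a wa t = restrict b wb t} ->
  conv D (seqI a b) (comb D a wa).
Proof.
move=> ua ub wts_a eq_ab; have uI : uniq (seqI a b) by apply: filter_uniq.
have Ia : {subset seqI a b <= a} by move=> t; rewrite mem_filter => /andP [].
have eqIa : {in a, restrict (seqI a b) wa =1 wa}.
  move=> t ta; rewrite /restrict mem_filter ta andbT; case: ifP => // tb.
  by have := eq_ab t; rewrite mem_cat ta /restrict ta tb => ->.
have big_I (V : zmodType) (F : R -> R -> V) : (forall t, F 0 t = 0) ->
    \sum_(t <- seqI a b) F (wa t) t = \sum_(t <- a) F (wa t) t.
  by move=> F0; rewrite (big_restrict F uI ua Ia F0); apply: eq_big_seq => t /eqIa ->.
exists wa; split; [|split].
- by move=> t /Ia; apply: wts_a.1.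
- by rewrite (big_I _ (fun x _ => x)) // wts_a.2.
- by rewrite (big_I _ (fun x t => x *: moment D t)) // => t; rewrite scale0r.
Qed.

Lemma restrict_eq_of_conv_seqI [D a b wa wb] : uniq a -> uniq b ->
  weights a wa -> weights b wb -> (size a <= D.+1)%N -> (size b <= D.+1)%N ->
  comb D a wa = comb D b wb -> conv D (seqI a b) (comb D a wa) ->
  restrict a wa =1 restrict b wb.
Proof.
move=> ua ub wts_a wts_b sa sb eq_comb [c [_ [c1 cp]]].
have uI : uniq (seqI a b) by apply: filter_uniq.
have Ia : {subset seqI a b <= a} by move=> t; rewrite mem_filter => /andP [].
have Ib : {subset seqI a b <= b} by move=> t; rewrite mem_filter => /andP [].
have unique U w : uniq U -> (size U <= D.+1)%N -> {subset seqI a b <= U} -> weights U w ->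
    comb D U w = comb D a wa -> restrict U w =1 restrict (seqI a b) c.
  move=> uU sU IU [_ w1] eqU; apply: restrict_sub => //.
  apply: (barycentric_unique D) => //.
    by rewrite w1 -c1 (big_restrict (fun x _ => x) uI uU IU).
  rewrite eqU cp /comb (big_restrict (fun x t => x *: moment D t) uI uU IU) // => t.
  by rewrite scale0r.
by move=> t; rewrite (unique a) // (unique b).
Qed.

Definition weight_diff a b wa wb t := restrict a wa t - restrict b wb t.

Lemma weight_diff_gt0 a b wa wb t :
  (forall x, x \in b -> 0 <= wb x) -> 0 < weight_diff a b wa wb t -> t \in a.
Proof.
move=> wb0; rewrite /weight_diff {1}/restrict; case: ifP => // _.
by rewrite /restrict; case: ifP => [/wb0|]; lra.
Qed.

Lemma weight_diff_lt0 a b wa wb t :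
  (forall x, x \in a -> 0 <= wa x) -> weight_diff a b wa wb t < 0 -> t \in b.
Proof.
move=> wa0; rewrite /weight_diff [X in _ - X]/restrict; case: ifP => // _.
by rewrite /restrict; case: ifP => [/wa0|]; lra.
Qed.

Lemma power_sum_weight_diff [a b] wa wb k : uniq a -> uniq b ->
  power_sum (undup (a ++ b)) (weight_diff a b wa wb) k =
  power_sum a wa k - power_sum b wb k.
Proof.
move=> ua ub.
have uU := undup_uniq (a ++ b).
have sa : {subset a <= undup (a ++ b)} by move=> t ta; rewrite mem_undup mem_cat ta.
have sb : {subset b <= undup (a ++ b)} by move=> t tb; rewrite mem_undup mem_cat tb orbT.
pose F (x t : R) := x * t ^+ k; have F0 t : F 0 t = 0 by rewrite /F mul0r.
rewrite /weight_diff power_sumB /power_sum.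
by rewrite (big_restrict F ua uU sa F0) (big_restrict F ub uU sb F0).
Qed.

Lemma power_sum_restrict_eq [a b wa wb] k : uniq a -> uniq b ->
  {in a ++ b, forall t, restrict a wa t = restrict b wb t} ->
  power_sum a wa k = power_sum b wb k.
Proof.
move=> ua ub eq_ab; apply/eqP; rewrite -subr_eq0 -(power_sum_weight_diff _ _ _ ua ub).
rewrite /power_sum big1_seq // => t.
by rewrite mem_undup => /andP [_ /eq_ab]; rewrite /weight_diff => ->; rewrite subrr mul0r.
Qed.

Lemma weight_diff_alternating [D a b wa wb] : uniq a -> uniq b ->
  (forall k, (k <= D)%N -> power_sum a wa k = power_sum b wb k) ->
  {in a ++ b, forall t, restrict a wa t = restrict b wb t} \/
  exists n v, [/\ (D < n)%N, alternating (weight_diff a b wa wb) v n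
    & n = D.+1 ->
      0 < weight_diff a b wa wb (v n) * (power_sum a wa D.+1 - power_sum b wb D.+1)].
Proof.
move=> ua ub eq_ps; set L := weight_diff a b wa wb.
have [nzU|] := boolP (has (fun t => L t != 0) (undup (a ++ b))).
  right; have mom k : (k <= D)%N -> power_sum (undup (a ++ b)) L k = 0.
    by move=> kD; rewrite power_sum_weight_diff ?eq_ps ?subrr.
  have [n [v [Dn alt _ top]]] := vanishing_moments_alternating (undup_uniq _) nzU mom.
  by exists n, v; split=> // nD; rewrite -(power_sum_weight_diff _ _ _ ua ub) top.
move/hasPn => L0; left => t tab; apply/eqP; rewrite -subr_eq0.
by apply/negPn/L0; rewrite mem_undup.
Qed.

(** * Overlap and interlacing *)

Lemma interlacing_weights [D a b] : uniq a -> uniq b -> interlacing_from D.+2 a b ->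
  exists wa wb, [/\ weights a wa, weights b wb, comb D a wa = comb D b wb,
    0 < (-1) ^+ D.+1 * (power_sum a wa D.+1 - power_sum b wb D.+1)
  & exists t, restrict a wa t != restrict b wb t].
Proof.
move=> ua ub /interlacing_kernel [U [mu [uU supp sgn mom top]]].
have nzU : has (fun t => mu t != 0) U.
  apply: contraTT top => /hasPn mu0.
  rewrite /power_sum big1_seq ?mulr0 ?ltxx // => t /andP [_ /mu0 /negPn /eqP ->].
  by rewrite mul0r.
have mass0 : \sum_(t <- U) mu t = 0 by rewrite -power_sum0 mom.
have [c c0 [wa [wb [[wa0 wb0] [wa1 wb1] [wa_pos wb_neg] wab]]]] := jordan_weights mass0 nzU.
have wa_a t : wa t != 0 -> t \in a /\ t \in U.
  by move/wa_pos => mu_pos; split; [apply: (sgn t).1 | apply/supp/lt0r_neq0].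
have wb_b t : wb t != 0 -> t \in b /\ t \in U.
  by move/wb_neg => mu_neg; split; [apply: (sgn t).2 | apply/supp/ltr0_neq0].
have ps_a k : power_sum a wa k = power_sum U wa k.
  by apply: eq_big_support => // t; rewrite mulf_eq0 negb_or => /andP [/wa_a [-> ->]].
have ps_b k : power_sum b wb k = power_sum U wb k.
  by apply: eq_big_support => // t; rewrite mulf_eq0 negb_or => /andP [/wb_b [-> ->]].
have ps_diff k : power_sum a wa k - power_sum b wb k = c * power_sum U mu k.
  rewrite ps_a ps_b -power_sumB /power_sum mulr_sumr.
  by apply: eq_bigr => t _; rewrite wab mulrA.
have ra t : restrict a wa t = wa t.
  rewrite /restrict; case: ifP => // ta.
  by apply/esym/eqP; apply: (contraFT _ ta) => /wa_a [].
have rb t : restrict b wb t = wb t.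
  rewrite /restrict; case: ifP => // tb.
  by apply/esym/eqP; apply: (contraFT _ tb) => /wb_b [].
have [wts_a wts_b] : weights a wa /\ weights b wb.
  by split; split=> //; rewrite -power_sum0 ?ps_a ?ps_b power_sum0.
exists wa, wb; split=> //.
- apply/(comb_eq_power_sums (etrans wts_a.2 (esym wts_b.2))) => k kD.
  by apply/eqP; rewrite -subr_eq0 ps_diff mom ?mulr0.
- by rewrite ps_diff mulrCA mulr_gt0.
have [t _ mu_t] := hasP nzU.
by exists t; rewrite ra rb -subr_eq0 wab mulf_neq0 // lt0r_neq0.
Qed.

Lemma overlap_intro [D a b p] : uniq a -> uniq b ->
  conv D a p -> conv D b p -> ~ conv D (seqI a b) p -> overlap D a b.
Proof. by move=> ua ub ca cb nI; split=> [q /conv_seqI|]; [apply | exists p]. Qed.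

Lemma interlacing_overlap_point [D a b] :
  uniq a -> uniq b -> (size a <= D.+1)%N -> (size b <= D.+1)%N ->
  interlacing_from D.+2 a b ->
  exists p, [/\ conv D a p, conv D b p & ~ conv D (seqI a b) p].
Proof.
move=> ua ub sa sb /(interlacing_weights ua ub) [wa [wb [wts_a wts_b eq_comb _ [t ne_t]]]].
exists (comb D a wa); split; [exact: conv_comb | rewrite eq_comb; exact: conv_comb|].
move/(restrict_eq_of_conv_seqI ua ub wts_a wts_b sa sb eq_comb) => eq_r.
by rewrite eq_r eqxx in ne_t.
Qed.

Lemma overlap_interlacing [D a b] :
  uniq a -> uniq b -> (size a <= D.+1)%N -> (size b <= D.+1)%N ->
  overlap D a b <-> interlacing D.+2 a b.
Proof.
move=> ua ub sa sb; split.
  move=> [_ [p [[wa [wa0 [wa1 pa]]] [[wb [wb0 [wb1 pb]]] nI]]]].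
  have eq_comb : comb D a wa = comb D b wb by rewrite /comb -pa -pb.
  have eq_ps := (comb_eq_power_sums (etrans wa1 (esym wb1))).1 eq_comb.
  have [eq_ab|[n [v [Dn alt _]]]] := weight_diff_alternating ua ub eq_ps.
    exfalso; apply: nI; rewrite pa.
    exact: (conv_seqI_restrict D ua ub (conj wa0 wa1) eq_ab).
  apply: (alternating_interlacing_any _ alt) => //; first exact: leq_ltn_trans Dn.
    by move=> t; apply: weight_diff_gt0.
  by move=> t; apply: weight_diff_lt0.
case=> [/(interlacing_overlap_point ua ub sa sb) [p [ca cb nI]]|].
  exact: overlap_intro ca cb nI.
move/(interlacing_overlap_point ub ua sb sa) => [p [cb ca nI]].
apply: overlap_intro ca cb _ => //; move/(conv_seqIC ua ub); exact: nI.
Qed.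

Lemma interlacing_from_drop k a b :
  interlacing_from k.+1 a b -> interlacing_from k a b /\ interlacing_from k b a.
Proof.
move=> [x [xinc xmem]]; split.
  by exists x; split=> i ik; [apply: xinc | apply: xmem]; apply: ltnW.
exists (fun i => x i.+1); split=> i ik; first exact: xinc.
by have := xmem i.+1 ik; rewrite /=; case: (odd i).
Qed.

Lemma interlacing_from_splice [k a b x y j] :
  increasing x k -> (forall i, (i < k)%N -> if odd i then x i \in b else x i \in a) ->
  increasing y k -> (forall i, (i < k)%N -> if odd i then y i \in a else y i \in b) ->
  (j < k)%N -> x j < y j -> interlacing_from k.+1 a b.
Proof.
move=> xinc xmem yinc ymem jk xy.
exists (fun i => if (i <= j)%N then x i else y i.-1); split=> i ik.
  case: (ltngtP i j) => [ij|ji|->] /=; rewrite ?leqnn ?(ltnW ij) ?ij ?ltnNge ?(ltnW ji) //.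
    by apply: xinc; apply: leq_ltn_trans ij jk.
  by case: i ji ik => // i ji ik; apply: yinc.
case: leqP => [ij|ji]; first by apply: xmem; apply: leq_ltn_trans ij jk.
by case: i ji ik => // i _ ik; have := ymem i ik; rewrite /=; case: (odd i).
Qed.

Lemma interlacing_from_merge k a b : (size a < k)%N ->
  interlacing_from k a b -> interlacing_from k b a -> interlacing k.+1 a b.
Proof.
move=> sa [x [xinc xmem]] [y [yinc ymem]].
have [/hasP [j]|/hasPn xy] := boolP (has (fun j => x j < y j) (iota 0 k)).
  rewrite mem_iota => /andP [_ jk] xyj; left.
  exact: (interlacing_from_splice xinc xmem yinc ymem jk xyj).
have [/hasP [j]|/hasPn yx] := boolP (has (fun j => y j < x j) (iota 0 k)).
  rewrite mem_iota => /andP [_ jk] yxj; right.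
  exact: (interlacing_from_splice yinc ymem xinc xmem jk yxj).
have eq_xy i : (i < k)%N -> x i = y i.
  move=> ik; have ik' : i \in iota 0 k by rewrite mem_iota.
  by apply/eqP; rewrite eq_le !leNgt (negbTE (xy i ik')) (negbTE (yx i ik')).
have sub : {subset mkseq x k <= a}.
  move=> t /mem_mkseqP [i ik ->]; have := xmem i ik; have := ymem i ik.
  by rewrite -eq_xy //; case: (odd i).
have := uniq_leq_size (uniq_mkseq xinc) sub; rewrite size_mkseq => ka.
by have := leq_ltn_trans ka sa; rewrite ltnn.
Qed.

Lemma interlacingS k a b : (size a < k)%N ->
  interlacing k.+1 a b <-> interlacing_from k a b /\ interlacing_from k b a.
Proof.
move=> sa; split=> [[/interlacing_from_drop [] | /interlacing_from_drop []] // |[]].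
exact: interlacing_from_merge.
Qed.

(** * Lifted simplices *)

Definition lift_below D a b := forall (p : 'rV[R]_D) (q q' : 'rV[R]_D.+1),
  conv D a p -> conv D b p -> conv D.+1 a q -> proj D q = p ->
  conv D.+1 b q' -> proj D q' = p -> lastc D q <= lastc D q'.

Lemma interlacing_lifts [D a b] : uniq a -> uniq b -> interlacing_from D.+2 a b ->
  exists p qa qb, [/\ conv D a p /\ conv D b p, conv D.+1 a qa /\ proj D qa = p,
    conv D.+1 b qb /\ proj D qb = p & 0 < (-1) ^+ D.+1 * (lastc D qa - lastc D qb)].
Proof.
move=> ua ub /(interlacing_weights ua ub) [wa [wb [wts_a wts_b eq_comb top _]]].
exists (comb D a wa), (comb D.+1 a wa), (comb D.+1 b wb).
split; first by split; [|rewrite eq_comb]; apply: conv_comb.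
- by split; [apply: conv_comb | rewrite proj_comb].
- by split; [apply: conv_comb | rewrite proj_comb eq_comb].
- by rewrite !lastc_comb.
Qed.

Lemma interlacing_not_lift_below D a b : uniq a -> uniq b ->
  (if odd D then interlacing_from D.+2 a b else interlacing_from D.+2 b a) ->
  ~ lift_below D a b.
Proof.
move=> ua ub; case oddD: (odd D) => int below.
  have [p [qa [qb [[ca cb] [cqa pa] [cqb pb] top]]]] := interlacing_lifts ua ub int.
  have := below p qa qb ca cb cqa pa cqb pb.
  by move: top; rewrite -signr_odd /= oddD /= expr0 mul1r; lra.
have [p [qb [qa [[cb ca] [cqb pb] [cqa pa] top]]]] := interlacing_lifts ub ua int.
have := below p qa qb ca cb cqa pa cqb pb.
by move: top; rewrite -signr_odd /= oddD /= expr1 mulN1r; lra.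
Qed.

(* The lifting of [a] lies below that of [b] unless some [(D + 2)]-interlacing
   sequence ends in [a]; the parity of [D] decides where such a sequence starts. *)
Lemma lift_below_of_not_interlacing D a b : uniq a -> uniq b ->
  ~ (if odd D then interlacing_from D.+2 a b else interlacing_from D.+2 b a) ->
  lift_below D a b.
Proof.
move=> ua ub not_int p q q' _ _ [wa [wa0 [wa1 ->]]] <- [wb [wb0 [wb1 ->]]].
rewrite !proj_comb !lastc_comb => /esym eq_comb.
have eq_ps := (comb_eq_power_sums (etrans wa1 (esym wb1))).1 eq_comb.
have [eq_ab|[n [v [Dn alt top]]]] := weight_diff_alternating ua ub eq_ps.
  by rewrite (power_sum_restrict_eq _ ua ub eq_ab).
set L := weight_diff a b wa wb in alt top.
have n0 : (0 < n)%N := leq_ltn_trans (leq0n D) Dn.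
have pos_a t : 0 < L t -> t \in a by apply: weight_diff_gt0.
have neg_b t : L t < 0 -> t \in b by apply: weight_diff_lt0.
have [Dn1|nD] := ltnP D.+1 n.
  have [ab ba] : interlacing_from D.+2 a b /\ interlacing_from D.+2 b a.
    by case: (alternating_interlacing_any (k := D.+3) n0 alt pos_a neg_b Dn1)
      => /interlacing_from_drop [].
  by exfalso; apply: not_int; case: (odd D).
have {Dn}nD : n = D.+1 by apply/eqP; rewrite eqn_leq nD Dn.
subst n; have sgn := alternating_sign 0 D.+1 n0 alt (leqnn _); rewrite add0n in sgn.
have L0 : L (v 0%N) != 0 := alternating_neq0 n0 alt (leq0n _).
have D2 : (0 + D.+2 <= D.+2)%N by [].
have Ln_neg : L (v D.+1) < 0.
  move: sgn not_int; rewrite -signr_odd /=.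
  case: (odd D) => /= sgn not_int; case: (ltrgtP (L (v 0%N)) 0) L0 => // L0 _.
  - by move: sgn; rewrite expr0 mul1r; nra.
  - by exfalso; apply: not_int; apply: (alternating_interlacing n0 alt pos_a neg_b D2).
  - by exfalso; apply: not_int; apply: (alternating_interlacingN n0 alt pos_a neg_b D2).
  - by move: sgn; rewrite expr1 mulN1r; nra.
by have := top erefl; nra.
Qed.

Lemma below_iff [D a b] : uniq a -> uniq b -> (size a <= D.+1)%N -> (size b <= D.+1)%N ->
  below D a b <-> interlacing D.+2 a b /\
    ~ (if odd D then interlacing_from D.+2 a b else interlacing_from D.+2 b a).
Proof.
move=> ua ub sa sb; have ov := overlap_interlacing ua ub sa sb.
split=> [[/ov ? below]|[/ov ? /(lift_below_of_not_interlacing D a b ua ub) ?]] //.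
by split=> // /(interlacing_not_lift_below D a b ua ub).
Qed.

End MomentCurve.

Theorem corollary2p5 (R : realType) (d : nat) (s u : seq R) :
  (0 < d)%N -> simplex_on d s -> simplex_on d u ->
  exactly_one4 (~ overlap d s u) (below d s u) (below d u s)
               (overlap d.+1 s u)
  /\ (~ overlap d s u <-> ~ interlacing d.+2 s u)
  /\ (below d s u <->
        if odd d
        then interlacing_from d.+2 u s /\ ~ interlacing_from d.+2 s u
        else interlacing_from d.+2 s u /\ ~ interlacing_from d.+2 u s)
  /\ (below d u s <->
        if odd d
        then interlacing_from d.+2 s u /\ ~ interlacing_from d.+2 u s
        else interlacing_from d.+2 u s /\ ~ interlacing_from d.+2 s u)
  /\ (overlap d.+1 s u <-> interlacing d.+3 s u).
Proof.
move=> _ [us ss] [uu su].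
have ov := overlap_interlacing us uu ss su.
have ov1 := overlap_interlacing us uu (leqW ss) (leqW su).
have int3 := interlacingS d.+2 s u ss.
have below_su := below_iff us uu ss su.
have below_us := below_iff uu us su ss.
have int_su : interlacing d.+2 s u <->
  interlacing_from d.+2 s u \/ interlacing_from d.+2 u s by [].
have int_us : interlacing d.+2 u s <->
  interlacing_from d.+2 s u \/ interlacing_from d.+2 u s by rewrite /interlacing or_comm.
move: (classic (interlacing_from d.+2 s u)) (classic (interlacing_from d.+2 u s)).
by case: (odd d) in below_su below_us *; rewrite /exactly_one4; tauto.
Qed.
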